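(* Let $\mathcal{S}=\langle\mathcal{L},\vdash\rangle$ be a Hilbert-style logic, with left variable inclusion companion $\mathcal{S}^l=\langle\mathcal{L},\vdash^l\rangle$ and restricted rules companion $\mathcal{S}^{re}=\langle\mathcal{L},\vdash^{re}\rangle$. Then $\vdash^l\,=\,\vdash^{re}$ if and only if $(\vdash^{re})^l\,=\,\vdash^l$; that is, $\vdash^l\,=\,\vdash^{re}$ holds iff for all $\Gamma\cup\{\alpha\}\subseteq\mathcal{L}$: $\Gamma\vdash^l\alpha$ iff there exists $\Delta\subseteq\Gamma$ such that $\mathrm{var}(\Delta)\subseteq\mathrm{var}(\alpha)$ and $\Delta\vdash^{re}\alpha$.
   Context: A logic is a pair $\langle\mathcal{L},\vdash\rangle$ where $\mathcal{L}$ is the formula algebra over a set of variables $V$ of some finite signature, and $\vdash\subseteq\mathcal{P}(\mathcal{L})\times\mathcal{L}$ is an arbitrary relation (written $\Gamma\vdash\alpha$). For $\alpha\in\mathcal{L}$, $\mathrm{var}(\alpha)$ is the set of variables occurring in $\alpha$, and $\mathrm{var}(\Delta)=\bigcup_{\alpha\in\Delta}\mathrm{var}(\alpha)$. A Hilbert-style logic is one given by a set of axioms $A\subseteq\mathcal{L}$ and a set of rules of inference $R\subseteq\mathcal{P}(\mathcal{L})\times\mathcal{L}$ (a rule $(\Gamma,\alpha)$ is written $\frac{\Gamma}{\alpha}$): $\Sigma\vdash\alpha$ iff there is a finite sequence $\alpha_1,\ldots,\alpha_n=\alpha$ such that each $\alpha_i$ is in $A$, or in $\Sigma$, or there is a rule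 $(\Delta,\alpha_i)\in R$ with $\Delta\subseteq\{\alpha_1,\ldots,\alpha_{i-1}\}$. For any logic $\mathcal{S}=\langle\mathcal{L},\vdash\rangle$, its left variable inclusion companion $\langle\mathcal{L},\vdash^l\rangle$ is defined by: $\Gamma\vdash^l\alpha$ iff there is $\Delta\subseteq\Gamma$ with $\mathrm{var}(\Delta)\subseteq\mathrm{var}(\alpha)$ and $\Delta\vdash\alpha$. For a Hilbert-style logic with axioms $A$ and rules $R$, its restricted rules companion $\langle\mathcal{L},\vdash^{re}\rangle$ is the Hilbert-style logic with axioms $A$ and rules $\{(\Gamma,\alpha)\in R\mid \mathrm{var}(\Gamma)\subseteq\mathrm{var}(\alpha)\}$. Here $(\vdash^{re})^l$ denotes the left variable inclusion companion of $\langle\mathcal{L},\vdash^{re}\rangle$. *)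

From mathcomp Require Import all_boot.
From Stdlib Require Import List.
Set Implicit Arguments. Unset Strict Implicit.

Inductive formula (V : Type) (Sig : finType) (ar : Sig -> nat) : Type :=
| Var : V -> formula V ar
| App : forall c : Sig, ('I_(ar c) -> formula V ar) -> formula V ar.

Section Defs.
Variables (V : Type) (Sig : finType) (ar : Sig -> nat).
Notation F := (formula V ar).

Fixpoint var (a : F) (x : V) : Prop :=
  match a with
  | Var y => x = y
  | App c f => exists i, var (f i) x
  end.

Definition varset (D : F -> Prop) (x : V) : Prop := exists a, D a /\ var a x.

Definition cons_rel := (F -> Prop) -> F -> Prop.

Definition justified (A : F -> Prop) (R : (F -> Prop) -> F -> Prop)
  (S : F -> Prop) (prev : list F) (b : F) : Prop :=
  A b \/ S b \/ exists D, R D b /\ (forall d, D d -> In d prev).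

(* Hilbert-style derivability: a finite sequence alpha_1,...,alpha_n = alpha
   each member justified (here the sequence is s ++ [alpha]). *)
Definition hilbert (A : F -> Prop) (R : (F -> Prop) -> F -> Prop) : cons_rel :=
  fun S a => exists s : list F,
    forall i, i < length (s ++ a :: nil) ->
      justified A R S (firstn i (s ++ a :: nil)) (nth i (s ++ a :: nil) a).

Definition lvi (vd : cons_rel) : cons_rel :=
  fun G a => exists D : F -> Prop,
    (forall d, D d -> G d) /\ (forall x, varset D x -> var a x) /\ vd D a.

Definition restrict_rules (R : (F -> Prop) -> F -> Prop) : (F -> Prop) -> F -> Prop :=
  fun G a => R G a /\ (forall x, varset G x -> var a x).

Definition rel_eq (r1 r2 : cons_rel) : Prop := forall G a, r1 G a <-> r2 G a.
End Defs.

(* A derivation of [a] with restricted rules stays a derivation after deleting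
   every member [b] with [var b] not included in [var a]: a rule concluding a
   kept member has premises whose variables lie inside those of its
   conclusion, so they are kept too, while axioms need nothing.  Hence the
   restricted rules companion is already left variable inclusive, and the
   equivalence reduces to rewriting with this identity. *)
From mathcomp Require Import all_boot.
From Stdlib Require Import List ClassicalEpsilon.
Set Implicit Arguments. Unset Strict Implicit.

Section Derivations.
Variables (V : Type) (Sig : finType) (ar : Sig -> nat).
Notation F := (formula V ar).
Variables (A : F -> Prop) (R : (F -> Prop) -> F -> Prop).

Fixpoint derivation (S : F -> Prop) (prev t : list F) : Prop :=
  match t with
  | nil => True
  | b :: t' => justified A R S prev b /\ derivation S (app prev (b :: nil)) t'
  end.

Lemma derivationE S d t prev :
  (forall i, i < length t ->
     justified A R S (app prev (firstn i t)) (nth i t d)) <->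
  derivation S prev t.
Proof.
elim: t prev => [|b t IHt] prev /=; first by [].
split.
- move=> just_t; split.
  + by have := just_t 0 isT; rewrite /= app_nil_r.
  + by apply/IHt => i lt_i; have := just_t i.+1 lt_i; rewrite /= -app_assoc.
- case=> just_b /IHt just_t [|i] lt_i /=; first by rewrite app_nil_r.
  by have := just_t i lt_i; rewrite -app_assoc.
Qed.

Lemma hilbertE S a :
  hilbert A R S a <-> exists s, derivation S nil (app s (a :: nil)).
Proof.
split=> -[s der_s]; exists s.
  exact: (derivationE S a (app s (a :: nil)) nil).1 der_s.
exact: (derivationE S a (app s (a :: nil)) nil).2 der_s.
Qed.

Lemma derivation_subset (S S' : F -> Prop) prev t :
  (forall b, S b -> S' b) -> derivation S prev t -> derivation S' prev t.
Proof.
move=> sub_SS'; elim: t prev => [|b t IHt] prev //= [just_b der_t].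
split; last exact: IHt.
by case: just_b => [? | [? | ?]]; [left | right; left | right; right]; auto.
Qed.

Lemma hilbert_subset (S S' : F -> Prop) a :
  (forall b, S b -> S' b) -> hilbert A R S a -> hilbert A R S' a.
Proof.
move=> sub_SS' /hilbertE [s der_s]; apply/hilbertE; exists s.
exact: derivation_subset der_s.
Qed.

Section Filter.
Variable p : pred F.
Hypothesis premises_closed : forall D b, R D b -> p b -> forall d, D d -> p d.

Lemma derivation_filter S t prev prev' :
  derivation S prev t -> (forall d, In d prev -> p d -> In d prev') ->
  derivation (fun b => S b /\ p b) prev' (filter p t).
Proof.
elim: t prev prev' => [|b t IHt] prev prev' //= [just_b der_t] sub_prev.
case pb: (p b) => /=; [split | ].
- case: just_b => [? | [? | [D [RDb prev_D]]]]; [by left | by right; left | ].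
  right; right; exists D; split=> // d Dd.
  exact: sub_prev (prev_D d Dd) (premises_closed RDb pb Dd).
- apply: IHt der_t _ => d; rewrite !in_app_iff => -[prev_d | [<- | []]] pd.
    by left; exact: sub_prev.
  by right; left.
- apply: IHt der_t _ => d; rewrite in_app_iff => -[prev_d | [<- | []]] pd.
    exact: sub_prev.
  by rewrite pd in pb.
Qed.

Lemma hilbert_filter S a :
  p a -> hilbert A R S a -> hilbert A R (fun b => S b /\ p b) a.
Proof.
move=> pa /hilbertE [s der_s]; apply/hilbertE; exists (filter p s).
have -> : app (filter p s) (a :: nil) = filter p (app s (a :: nil)).
  by rewrite filter_app /= pa.
exact: derivation_filter der_s _.
Qed.

End Filter.
End Derivations.

Lemma lvi_hilbert_restrict_rules (V : Type) (Sig : finType) (ar : Sig -> nat)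
  (A : formula V ar -> Prop)
  (R : (formula V ar -> Prop) -> formula V ar -> Prop) :
  rel_eq (lvi (hilbert A (restrict_rules R))) (hilbert A (restrict_rules R)).
Proof.
move=> G a; split=> [[D [sub_DG [_ der_a]]] | der_a].
  exact: hilbert_subset sub_DG der_a.
pose P (b : formula V ar) := forall x, var b x -> var a x.
pose p b := is_left (excluded_middle_informative (P b)).
have pP b : p b <-> P b by rewrite /p; case: excluded_middle_informative.
exists (fun b => G b /\ p b); split; first by move=> d [].
split; first by move=> x [b [[_ /pP Pb] var_b]]; exact: Pb.
apply: hilbert_filter der_a; last exact/pP.
move=> D b [_ var_D] /pP Pb d Dd; apply/pP => x var_d.
by apply: Pb; apply: var_D; exists d.
Qed.

Theorem theorem2p7 (V : Type) (Sig : finType) (ar : Sig -> nat)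
  (A : formula V ar -> Prop)
  (R : (formula V ar -> Prop) -> formula V ar -> Prop) :
  rel_eq (lvi (hilbert A R)) (hilbert A (restrict_rules R)) <->
  rel_eq (lvi (hilbert A (restrict_rules R))) (lvi (hilbert A R)).
Proof.
have lvi_re := lvi_hilbert_restrict_rules A R.
split=> eq_rel G a; first by rewrite lvi_re eq_rel.
by rewrite -lvi_re eq_rel.
Qed.
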